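(* Let $M$ be a simple extended matrix with $n\geq 1$ rows, $m\geq 0$ left columns and $k\geq 1$ variables, $$M=\left[ \begin{array}{ccc|c} x_{11} & \cdots & x_{1m} & y_{1}\\ \vdots & & \vdots & \vdots\\ x_{n1} & \cdots & x_{nm} & y_{n}\end{array} \right],$$ and let $n'\geq 2$ be an integer. The following statements are equivalent: (a) $M\Rightarrow_{\mathsf{lex}}\mathsf{Cube}_{n'}$; (b) $M\Rightarrow_{\mathsf{lex}_\ast}\mathsf{Cube}_{n'}$; (c) $M\Rightarrow_{\mathsf{reg}}\mathsf{Cube}_{n'}$; (d) $M\Rightarrow_{\mathsf{reg}_\ast}\mathsf{Cube}_{n'}$; (e) $M\Rightarrow_{\mathsf{alg}}\mathsf{Cube}_{n'}$; (f) $M\Rightarrow_{\mathsf{alg}_\ast}\mathsf{Cube}_{n'}$; (g) $M\Rightarrow_{\mathsf{ess\,alg}}\mathsf{Cube}_{n'}$; (h) $M\Rightarrow_{\mathsf{ess\,alg}_\ast}\mathsf{Cube}_{n'}$; (i) $M\Rightarrow_{\mathsf{reg\,ess\,alg}}\mathsf{Cube}_{n'}$; (j) $M\Rightarrow_{\mathsf{reg\,ess\,alg}_\ast}\mathsf{Cube}_{n'}$; (k) there exist $i_1,\dots,i_{n'}\in\{1,\dots,n\}$ such that there is no $j\in\{1,\dots,m\}$ with $x_{i_aj}=y_{i_a}$ for every $a\in\{1,\dots,n'\}$; (l) there does not exist a function $p\colon\{0,1\}^m\to\{0,1\}$ making $(\{0,1\},p)$ an algebra of $\mathbb{V}_M$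 such that the induced power $(\{0,1\}^{n'},p^{n'})$ is compatible with the $n'$-ary relation $R_{n'}=\{0,1\}^{n'}\setminus\{(0,\dots,0)\}$ (i.e., $p^{n'}(r_1,\dots,r_m)\in R_{n'}$ for all $r_1,\dots,r_m\in R_{n'}$, where $p^{n'}$ is applied coordinatewise).
   Context: A simple extended matrix $M$ (with parameters $n\geq 1$, $m\geq 0$, $k\geq 1$) is an $n\times(m+1)$ array as displayed, whose entries $x_{ij}$ and $y_i$ are (not necessarily distinct) variables from $\{x_1,\dots,x_k\}$; the first $m$ columns are the left columns, the last is the right column. In a finitely complete category $\mathbb{C}$, an internal $n$-ary relation $r\colon R\rightarrowtail A^n$ (a monomorphism) is $M$-closed if for every object $B$ and every function $f\colon\{x_1,\dots,x_k\}\to\mathbb{C}(B,A)$ such that, for each $j\in\{1,\dots,m\}$, the morphism $(f(x_{1j}),\dots,f(x_{nj}))\colon B\to A^n$ factors through $r$, the morphism $(f(y_1),\dots,f(y_n))\colon B\to A^n$ also factors through $r$. $\mathbb{C}$ has $M$-closed relations if every internal $n$-ary relation is $M$-closed. (In a variety, internal relations are subalgebras $R\subseteq A^n$, and $M$-closedness means: for every $f\colon\{x_1,\dots,x_k\}\to A$, if all columns $(f(x_{1j}),\dots,f(x_{nj}))$ lie in $R$, then $(f(y_1),\dots,f(y_n))\in R$.) For a class $\mathcal{C}$ of finitely complete categories, $M_1\Rightarrow_{\mathcal{C}}M_2$ means every category in $\mathcal{C}$ with $M_1$-closed relations has $M_2$-closed relations. The classes are: $\mathsf{lex}$ = finitely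 complete categories; $\mathsf{reg}$ = regular categories (finitely complete, with coequalizers of kernel pairs and pullback-stable regular epimorphisms); $\mathsf{alg}$ = one-sorted finitary varieties of universal algebras; $\mathsf{ess\,alg}$ = essentially algebraic (equivalently, locally presentable) categories, i.e., categories equivalent to categories of models of a (many-sorted) essentially algebraic theory; $\mathsf{reg\,ess\,alg}$ = those essentially algebraic categories that are regular. A subscript $\ast$ denotes the subclass of pointed categories (having a zero object). For $n\geq 2$, $\mathsf{Cube}_{n}$ is the simple extended matrix with $n$ rows and variables $\{x_1,x_2\}$ whose $2^n-1$ left columns are all $n$-tuples of elements of $\{x_1,x_2\}$ except $(x_1,\dots,x_1)$, and whose right column is $(x_1,\dots,x_1)$. (A variety has $\mathsf{Cube}_n$-closed relations iff it has an $n$-cube term.) $\mathbb{V}_M$ is the variety with a single $m$-ary basic operation $p$ and axioms $p(x_{i1},\dots,x_{im})=y_i$ for $i=1,\dots,n$ (in the variables $x_1,\dots,x_k$). *)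

From Stdlib Require Import ProofIrrelevance.
From mathcomp Require Import all_boot.

Set Implicit Arguments.
Unset Strict Implicit.
Unset Printing Implicit Defensive.

Record Category := Cat {
  Obj : Type;
  Hom : Obj -> Obj -> Type;
  idm : forall A : Obj, Hom A A;
  comp : forall A B D : Obj, Hom B D -> Hom A B -> Hom A D;
  comp_idl : forall (A B : Obj) (f : Hom A B), comp (idm B) f = f;
  comp_idr : forall (A B : Obj) (f : Hom A B), comp f (idm A) = f;
  comp_assoc : forall (A B D E : Obj) (h : Hom D E) (g : Hom B D) (f : Hom A B),
      comp h (comp g f) = comp (comp h g) f
}.
Arguments Hom {c} A B.
Arguments idm {c} A.
Arguments comp {c A B D} g f.

Definition is_mono (C : Category) (A B : Obj C) (m : Hom A B) : Prop :=
  forall (X : Obj C) (f g : Hom X A), comp m f = comp m g -> f = g.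

Definition is_iso (C : Category) (A B : Obj C) (f : Hom A B) : Prop :=
  exists g : Hom B A, comp g f = idm A /\ comp f g = idm B.

Definition is_terminal (C : Category) (T : Obj C) : Prop :=
  forall X : Obj C, exists f : Hom X T, forall g : Hom X T, g = f.

Definition is_initial (C : Category) (I : Obj C) : Prop :=
  forall X : Obj C, exists f : Hom I X, forall g : Hom I X, g = f.

Definition pointed (C : Category) : Prop :=
  exists Z : Obj C, is_initial Z /\ is_terminal Z.

Definition is_pullback (C : Category) (A B D P : Obj C)
    (f : Hom A D) (g : Hom B D) (p1 : Hom P A) (p2 : Hom P B) : Prop :=
  comp f p1 = comp g p2 /\
  forall (Q : Obj C) (q1 : Hom Q A) (q2 : Hom Q B), comp f q1 = comp g q2 ->
    exists u : Hom Q P, (comp p1 u = q1 /\ comp p2 u = q2) /\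
      forall v : Hom Q P, comp p1 v = q1 -> comp p2 v = q2 -> v = u.

Definition finitely_complete (C : Category) : Prop :=
  (exists T : Obj C, is_terminal T) /\
  forall (A B D : Obj C) (f : Hom A D) (g : Hom B D),
    exists (P : Obj C) (p1 : Hom P A) (p2 : Hom P B), is_pullback f g p1 p2.

Definition is_coequalizer (C : Category) (R A Q : Obj C)
    (a b : Hom R A) (q : Hom A Q) : Prop :=
  comp q a = comp q b /\
  forall (Z : Obj C) (z : Hom A Z), comp z a = comp z b ->
    exists u : Hom Q Z, comp u q = z /\ forall v : Hom Q Z, comp v q = z -> v = u.

Definition is_regular_epi (C : Category) (A Q : Obj C) (e : Hom A Q) : Prop :=
  exists (R : Obj C) (a b : Hom R A), is_coequalizer a b e.

Definition regular (C : Category) : Prop :=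
  finitely_complete C /\
  (forall (A B : Obj C) (f : Hom A B) (K : Obj C) (k1 k2 : Hom K A),
      is_pullback f f k1 k2 -> exists (Q : Obj C) (q : Hom A Q), is_coequalizer k1 k2 q) /\
  (forall (A B D : Obj C) (e : Hom A D) (g : Hom B D) (P : Obj C)
          (p1 : Hom P A) (p2 : Hom P B),
      is_regular_epi e -> is_pullback e g p1 p2 -> is_regular_epi p2).

Definition is_power (C : Category) (A P : Obj C) (n : nat) (pr : 'I_n -> Hom P A) : Prop :=
  forall (B : Obj C) (f : 'I_n -> Hom B A),
    exists u : Hom B P, (forall i, comp (pr i) u = f i) /\
      forall v : Hom B P, (forall i, comp (pr i) v = f i) -> v = u.

Record Functor (C D : Category) := Fun {
  fobj : Obj C -> Obj D;
  fmap : forall A B : Obj C, Hom A B -> Hom (fobj A) (fobj B);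
  fmap_id : forall A : Obj C, fmap (idm A) = idm (fobj A);
  fmap_comp : forall (A B E : Obj C) (g : Hom B E) (f : Hom A B),
      fmap (comp g f) = comp (fmap g) (fmap f)
}.
Arguments fobj {C D} _ _.
Arguments fmap {C D} _ {A B} _.

Definition equivalent (C D : Category) : Prop :=
  exists F : Functor C D,
    (forall (A B : Obj C) (g : Hom (fobj F A) (fobj F B)), exists f : Hom A B, fmap F f = g) /\
    (forall (A B : Obj C) (f f' : Hom A B), fmap F f = fmap F f' -> f = f') /\
    (forall Y : Obj D, exists (X : Obj C) (i : Hom (fobj F X) Y), is_iso i).

(* rows n, left columns m, variables k; indices are 0-based:
   ent i j = x_{(i+1)(j+1)}, rcol i = y_{i+1}, variable v : 'I_k is x_{v+1} *)
Record SEMatrix := SEM {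
  rows : nat;
  lcols : nat;
  nvars : nat;
  ent : 'I_rows -> 'I_lcols -> 'I_nvars;
  rcol : 'I_rows -> 'I_nvars
}.
Arguments ent : clear implicits.
Arguments rcol : clear implicits.

Definition M_closed (C : Category) (M : SEMatrix) (A P : Obj C)
    (pr : 'I_(rows M) -> Hom P A) (R : Obj C) (r : Hom R P) : Prop :=
  forall (B : Obj C) (f : 'I_(nvars M) -> Hom B A),
    (forall j : 'I_(lcols M), exists h : Hom B R,
        forall i, comp (pr i) (comp r h) = f (ent M i j)) ->
    exists h : Hom B R, forall i, comp (pr i) (comp r h) = f (rcol M i).

Arguments M_closed {C} M {A P} pr {R} r.

Definition has_M_closed_relations (C : Category) (M : SEMatrix) : Prop :=
  forall (A P : Obj C) (pr : 'I_(rows M) -> Hom P A) (R : Obj C) (r : Hom R P),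
    is_power pr -> is_mono r -> @M_closed C M A P pr R r.

Definition implies_in (K : Category -> Prop) (M1 M2 : SEMatrix) : Prop :=
  forall C : Category, K C -> has_M_closed_relations C M1 -> has_M_closed_relations C M2.

(* Cube_n: variables x1 = ord0, x2 = 1; column j (0-based) is the tuple whose
   i-th entry is x2 iff bit i of j+1 is 1; j+1 ranges over 1 .. 2^n - 1,
   i.e. all tuples except (x1,...,x1), each exactly once. *)
Definition Cube (n : nat) : SEMatrix :=
  @SEM n (2 ^ n - 1) 2
    (fun (i : 'I_n) (j : 'I_(2 ^ n - 1)) => (inord (odd (j.+1 %/ 2 ^ i)) : 'I_2))
    (fun _ => ord0).

Record signature := Sig { sop : Type; sar : sop -> nat }.

Inductive term (Sg : signature) : Type :=
| tvar : nat -> term Sg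
| tapp : forall o : sop Sg, ('I_(sar o) -> term Sg) -> term Sg.

Fixpoint teval (Sg : signature) (A : Type) (ops : forall o : sop Sg, ('I_(sar o) -> A) -> A)
    (rho : nat -> A) (t : term Sg) : A :=
  match t with
  | tvar n => rho n
  | tapp o args => ops o (fun i => teval ops rho (args i))
  end.

Record eq_theory := EqTh {
  eq_sig : signature;
  eq_idx : Type;
  eq_lhs : eq_idx -> term eq_sig;
  eq_rhs : eq_idx -> term eq_sig
}.

Record valgebra (T : eq_theory) := VAlg {
  acar : Type;
  aop : forall o : sop (eq_sig T), ('I_(sar o) -> acar) -> acar;
  asat : forall (e : eq_idx T) (rho : nat -> acar),
      teval aop rho (eq_lhs e) = teval aop rho (eq_rhs e)
}.
Arguments aop {T} v o _.

Record vhom (T : eq_theory) (A B : valgebra T) := VHom {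
  vhfun : acar A -> acar B;
  vhmor : forall o (args : 'I_(sar o) -> acar A),
      vhfun (aop A o args) = aop B o (fun i => vhfun (args i))
}.

Lemma vhom_eq (T : eq_theory) (A B : valgebra T) (f g : vhom A B) :
  vhfun f = vhfun g -> f = g.
Proof.
case: f g => f pf [g pg] /= E; subst g; congr VHom; apply: proof_irrelevance.
Qed.

Definition vhom_id (T : eq_theory) (A : valgebra T) : vhom A A :=
  @VHom T A A (fun x => x) (fun o args => erefl).

Definition vhom_comp (T : eq_theory) (A B D : valgebra T) (g : vhom B D) (f : vhom A B) :
  vhom A D.
Proof.
refine (@VHom T A D (fun x => vhfun g (vhfun f x)) _).
by move=> o args; rewrite (vhmor f) (vhmor g).
Defined.

Definition VarietyCat (T : eq_theory) : Category.
Proof.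
refine (@Cat (valgebra T) (@vhom T) (@vhom_id T) (@vhom_comp T) _ _ _);
  by move=> *; apply: vhom_eq.
Defined.

Record ea_signature := EASig {
  ea_sort : Type;
  ea_op : Type;
  ea_ar : ea_op -> Type;
  ea_dom : forall o : ea_op, ea_ar o -> ea_sort;
  ea_cod : ea_op -> ea_sort
}.

Inductive eterm (Sg : ea_signature) (V : ea_sort Sg -> Type) : ea_sort Sg -> Type :=
| evar : forall s : ea_sort Sg, V s -> eterm V s
| eapp : forall o : ea_op Sg, (forall i : ea_ar o, eterm V (ea_dom i)) ->
           eterm V (ea_cod o).

Inductive only_total (Sg : ea_signature) (tot : ea_op Sg -> Prop) (V : ea_sort Sg -> Type) :
  forall s : ea_sort Sg, eterm V s -> Prop :=
| ot_var : forall (s : ea_sort Sg) (v : V s), @only_total Sg tot V s (@evar Sg V s v)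
| ot_app : forall (o : ea_op Sg) (args : forall i : ea_ar o, eterm V (ea_dom i)),
    tot o -> (forall i, @only_total Sg tot V (ea_dom i) (args i)) ->
    @only_total Sg tot V (ea_cod o) (@eapp Sg V o args).

Record ea_equation (Sg : ea_signature) (V : ea_sort Sg -> Type) := EAEq {
  eqn_sort : ea_sort Sg;
  eqn_lhs : eterm V eqn_sort;
  eqn_rhs : eterm V eqn_sort
}.

Definition std_vars (Sg : ea_signature) (o : ea_op Sg) : ea_sort Sg -> Type :=
  fun s => {i : ea_ar o | ea_dom i = s}.

Record ea_theory := EATh {
  ea_sig : ea_signature;
  ea_total : ea_op ea_sig -> Prop;
  ea_E : Type;
  ea_E_vars : ea_E -> ea_sort ea_sig -> Type;
  ea_E_eqn : forall e : ea_E, ea_equation (ea_E_vars e);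
  ea_Def_idx : ea_op ea_sig -> Type;
  ea_Def : forall o : ea_op ea_sig, ea_Def_idx o -> ea_equation (@std_vars ea_sig o);
  ea_Def_total : forall (o : ea_op ea_sig) (d : ea_Def_idx o),
      only_total ea_total (eqn_lhs (ea_Def d)) /\ only_total ea_total (eqn_rhs (ea_Def d))
}.

Arguments ea_total : clear implicits.
Arguments ea_E_vars : clear implicits.
Arguments ea_E_eqn : clear implicits.
Arguments ea_Def_idx : clear implicits.
Arguments ea_Def : clear implicits.

Record ea_palg (Sg : ea_signature) := EAPAlg {
  pcar : ea_sort Sg -> Type;
  pop : forall o : ea_op Sg, (forall i : ea_ar o, pcar (ea_dom i)) -> option (pcar (ea_cod o))
}.
Arguments pop {Sg} e o _.

Inductive peval (Sg : ea_signature) (A : ea_palg Sg) (V : ea_sort Sg -> Type)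
    (rho : forall s, V s -> pcar A s) : forall s : ea_sort Sg, eterm V s -> pcar A s -> Prop :=
| pev_var : forall (s : ea_sort Sg) (v : V s), @peval Sg A V rho s (@evar Sg V s v) (rho s v)
| pev_app : forall (o : ea_op Sg) (args : forall i : ea_ar o, eterm V (ea_dom i))
      (vals : forall i : ea_ar o, pcar A (ea_dom i)) (b : pcar A (ea_cod o)),
    (forall i, @peval Sg A V rho (ea_dom i) (args i) (vals i)) ->
    pop A o vals = Some b ->
    @peval Sg A V rho (ea_cod o) (@eapp Sg V o args) b.

Definition std_assign (Sg : ea_signature) (A : ea_palg Sg) (o : ea_op Sg)
    (a : forall i : ea_ar o, pcar A (ea_dom i)) : forall s, std_vars o s -> pcar A s :=
  fun s v => eq_rect _ (pcar A) (a (proj1_sig v)) s (proj2_sig v).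

Definition holds_def (Sg : ea_signature) (A : ea_palg Sg) (V : ea_sort Sg -> Type)
    (rho : forall s, V s -> pcar A s) (e : ea_equation V) : Prop :=
  exists b, @peval Sg A V rho _ (eqn_lhs e) b /\ @peval Sg A V rho _ (eqn_rhs e) b.

Definition holds_weak (Sg : ea_signature) (A : ea_palg Sg) (V : ea_sort Sg -> Type)
    (rho : forall s, V s -> pcar A s) (e : ea_equation V) : Prop :=
  forall b1 b2, @peval Sg A V rho _ (eqn_lhs e) b1 -> @peval Sg A V rho _ (eqn_rhs e) b2 -> b1 = b2.

Definition is_ea_model (T : ea_theory) (A : ea_palg (ea_sig T)) : Prop :=
  (forall o a, ea_total T o -> pop A o a <> None) /\
  (forall o a, ~ ea_total T o ->
     (pop A o a <> None <-> forall d : ea_Def_idx T o, holds_def (std_assign a) (ea_Def T o d))) /\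
  (forall (e : ea_E T) (rho : forall s, ea_E_vars T e s -> pcar A s), holds_weak rho (ea_E_eqn T e)).

Record ea_model (T : ea_theory) := EAMod {
  em_alg : ea_palg (ea_sig T);
  em_model : is_ea_model em_alg
}.

Record ea_hom (T : ea_theory) (A B : ea_model T) := EAHom {
  ehfun : forall s, pcar (em_alg A) s -> pcar (em_alg B) s;
  ehmor : forall o a b, pop (em_alg A) o a = Some b ->
      pop (em_alg B) o (fun i => ehfun (a i)) = Some (ehfun b)
}.

Lemma ea_hom_eq (T : ea_theory) (A B : ea_model T) (f g : ea_hom A B) :
  ehfun f = ehfun g -> f = g.
Proof.
case: f g => f pf [g pg] /= E; subst g; congr EAHom; apply: proof_irrelevance.
Qed.

Definition ea_hom_id (T : ea_theory) (A : ea_model T) : ea_hom A A :=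
  @EAHom T A A (fun s x => x) (fun o a b H => H).

Definition ea_hom_comp (T : ea_theory) (A B D : ea_model T) (g : ea_hom B D) (f : ea_hom A B) :
  ea_hom A D.
Proof.
refine (@EAHom T A D (fun s x => ehfun g (ehfun f x)) _).
by move=> o a b H; apply: (ehmor g); apply: (ehmor f).
Defined.

Definition ModelCat (T : ea_theory) : Category.
Proof.
refine (@Cat (ea_model T) (@ea_hom T) (@ea_hom_id T) (@ea_hom_comp T) _ _ _);
  by move=> *; apply: ea_hom_eq.
Defined.

Definition cls_lex (C : Category) : Prop := finitely_complete C.
Definition cls_reg (C : Category) : Prop := regular C.
Definition cls_alg (C : Category) : Prop := exists T : eq_theory, equivalent C (VarietyCat T).
Definition cls_essalg (C : Category) : Prop := exists T : ea_theory, equivalent C (ModelCat T).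
Definition cls_regessalg (C : Category) : Prop := cls_essalg C /\ regular C.
Definition cls_pt (K : Category -> Prop) (C : Category) : Prop := K C /\ pointed C.

(* ({0,1}, p) satisfies p(x_{i1},...,x_{im}) = y_i for all i  (0 = false, 1 = true) *)
Definition VM_algebra_bool (M : SEMatrix) (p : {ffun 'I_(lcols M) -> bool} -> bool) : Prop :=
  forall (f : 'I_(nvars M) -> bool) (i : 'I_(rows M)),
    p [ffun j => f (ent M i j)] = f (rcol M i).

(* p^n' preserves R_n' = {0,1}^n' \ {(0,...,0)} ; r j is the j-th argument in R_n' *)
Definition compatible_Rn (M : SEMatrix) (n' : nat) (p : {ffun 'I_(lcols M) -> bool} -> bool) : Prop :=
  forall r : 'I_(lcols M) -> 'I_n' -> bool,
    (forall j, exists a, r j a) -> exists a, p [ffun j => r j a].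

Arguments VM_algebra_bool : clear implicits.
Arguments compatible_Rn : clear implicits.

(* Suppose rows i_1, ..., i_n' of M block every left column, i.e. no column j
   has x_{i_a j} = y_{i_a} for all a. Given R <= A^n' in a finitely complete
   category, pull R back along the map (A^n')^n -> A^n' whose a-th coordinate
   is the a-th coordinate of the i_a-th factor; the pullback is M-closed.
   Substitute for each variable v the tuple that is f(x_1) in the coordinates a
   with v = y_{i_a} and f(x_2) elsewhere: blocking turns every left column of M
   into a column of Cube_n' other than (x_1, ..., x_1), and the right column of
   M into (x_1, ..., x_1), so R is Cube_n'-closed.
   If no rows block, p(t) = (forall i, exists j, x_{ij} = y_i /\ t_j) makes
   {0,1} an algebra of V_M preserving R_n' = {0,1}^n' \ {0}, and conversely
   blocking rows rule out any such p. In V_M with an added constant, a pointed,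
   regular, algebraic and essentially algebraic category, every relation is
   M-closed, but R_n' <= {0,1}^n' is not Cube_n'-closed. Every category in the
   ten classes is finitely complete, so each of the ten implications holds
   exactly when blocking rows exist. *)

From Pilot Require Import Defs.
From mathcomp Require Import all_boot zify.
From Stdlib Require Import Classical ProofIrrelevance FunctionalExtensionality ClassicalEpsilon.

Set Implicit Arguments.
Unset Strict Implicit.
Unset Printing Implicit Defensive.

Local Notation comp := Defs.comp.

(** * Blocking rows and the two-element algebra *)

Section BlockingRows.
Variable M : SEMatrix.

Definition has_blocking_rows (n' : nat) : Prop :=
  exists idx : 'I_n' -> 'I_(rows M),
    forall j : 'I_(lcols M), exists a, ent M (idx a) j != rcol M (idx a).

Lemma has_blocking_rowsE n' :
  has_blocking_rows n' <->
  exists idx : 'I_n' -> 'I_(rows M),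
    ~ exists j : 'I_(lcols M), forall a : 'I_n', ent M (idx a) j = rcol M (idx a).
Proof.
split=> -[idx Hidx]; exists idx.
  by move=> [j Hj]; have [a /eqP] := Hidx j; apply.
move=> j; apply: NNPP => Hj; apply: Hidx; exists j => a.
by apply/eqP; apply: negbNE; apply/negP => Ha; apply: Hj; exists a.
Qed.

Lemma not_blocking_rows n' : ~ has_blocking_rows n' ->
  forall idx : 'I_n' -> 'I_(rows M),
    exists j : 'I_(lcols M), forall a, ent M (idx a) j = rcol M (idx a).
Proof.
move=> nB idx; apply: NNPP => Hidx; apply: nB; apply/has_blocking_rowsE.
by exists idx.
Qed.

Definition agreement_op (t : {ffun 'I_(lcols M) -> bool}) : bool :=
  [forall i, [exists j, (ent M i j == rcol M i) && t j]].

Lemma agreement_op_VM n' : 2 <= n' -> ~ has_blocking_rows n' ->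
  VM_algebra_bool M agreement_op.
Proof.
move=> n'_ge2 /not_blocking_rows common f i; apply/idP/idP.
  by move=> /forallP/(_ i)/existsP[j /andP[/eqP <-]]; rewrite ffunE.
move=> fy; apply/forallP => i'; apply/existsP.
have [j Hj] := common (fun a : 'I_n' => if val a == 0 then i else i').
have /= Ei := Hj (Ordinal (ltnW n'_ge2)); have /= Ei' := Hj (Ordinal n'_ge2).
by exists j; rewrite Ei' eqxx ffunE Ei.
Qed.

Lemma agreement_op_compatible n' : ~ has_blocking_rows n' ->
  compatible_Rn M n' agreement_op.
Proof.
move=> /not_blocking_rows common r r_nonzero; apply: NNPP => none.
have miss a : exists i, ~~ [exists j, (ent M i j == rcol M i) && [ffun j => r j a] j].
  by apply/existsP; rewrite -negb_forall; apply/negP => Ha; apply: none; exists a.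
have [idx Hidx] := fin_all_exists miss.
have [j Hj] := common idx; have [a Ha] := r_nonzero j.
by move/negP: (Hidx a); apply; apply/existsP; exists j; rewrite Hj eqxx ffunE Ha.
Qed.

Lemma blocking_rows_incompatible n' p : has_blocking_rows n' ->
  VM_algebra_bool M p -> ~ compatible_Rn M n' p.
Proof.
move=> [idx Hidx] Hp compat.
have [a] := compat (fun j a => ent M (idx a) j != rcol M (idx a)) Hidx.
by rewrite (Hp (fun v => v != rcol M (idx a)) (idx a)) eqxx.
Qed.

Lemma blocking_rowsP n' : 2 <= n' ->
  has_blocking_rows n' <->
  ~ exists p, VM_algebra_bool M p /\ compatible_Rn M n' p.
Proof.
move=> n'_ge2; split.
  by move=> B [p [Hp /(blocking_rows_incompatible B Hp)]].
move=> none; apply: NNPP => nB; apply: none; exists agreement_op.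
by split; [exact: (agreement_op_VM n'_ge2) | exact: agreement_op_compatible].
Qed.

End BlockingRows.

(** * Columns of Cube_n *)

Lemma Cube_entE n (a : 'I_n) (c : 'I_(2 ^ n - 1)) :
  ent (Cube n) a c = if odd (c.+1 %/ 2 ^ a) then inord 1 else ord0.
Proof. by rewrite /=; case: odd; apply: val_inj; rewrite /= inordK. Qed.

Definition binary (n : nat) (b : nat -> bool) : nat := \sum_(a < n) b a * 2 ^ a.

Lemma binaryS n b : binary n.+1 b = b 0 + 2 * binary n (fun k => b k.+1).
Proof.
rewrite /binary big_ord_recl /= expn0 muln1 big_distrr /=; congr (_ + _).
by apply: eq_bigr => i _; rewrite /bump /= add1n expnS mulnCA.
Qed.

Lemma binary_bit n b i : i < n -> odd (binary n b %/ 2 ^ i) = b i.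
Proof.
elim: n b i => [//|n IH] b [|i] Hi.
  by rewrite expn0 divn1 binaryS oddD oddM /=; case: (b 0).
rewrite binaryS expnS divnMA (mulnC 2) divnDMl //.
by rewrite (divn_small (m := b 0)) ?add0n ?IH //; case: (b 0).
Qed.

Lemma binary_lt n b : binary n b < 2 ^ n.
Proof.
elim: n b => [|n IH] b; first by rewrite /binary big_ord0.
by rewrite binaryS expnS; have := IH (fun k => b k.+1); case: (b 0) => /=; lia.
Qed.

Lemma binary_gt0 n (b : nat -> bool) i : i < n -> b i -> 0 < binary n b.
Proof.
elim: n b i => [//|n IH] b [|i] Hi bi; rewrite binaryS; first by rewrite bi.
by have := IH (fun k => b k.+1) i Hi bi; lia.
Qed.

Lemma Cube_column n (b : 'I_n -> bool) : (exists a, b a) ->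
  exists c, forall a, ent (Cube n) a c = if b a then inord 1 else ord0.
Proof.
move=> [a0 ba0].
pose bn k := if insub k is Some a then b a else false.
have bnE (a : 'I_n) : bn a = b a by rewrite /bn valK.
have pos := binary_gt0 (ltn_ord a0) (etrans (bnE a0) ba0).
have lt : (binary n bn).-1 < 2 ^ n - 1 by have := binary_lt n bn; lia.
by exists (Ordinal lt) => a; rewrite Cube_entE /= prednK // binary_bit ?bnE.
Qed.

Lemma Cube_column_x2 n (c : 'I_(lcols (Cube n))) : exists a, ent (Cube n) a c = inord 1.
Proof.
have c_lt : c < 2 ^ n - 1 := ltn_ord c; set N := c.+1.
have log_le := trunc_logP (isT : 1 < 2) (ltn0Sn c).
have log_lt : trunc_log 2 N < n.
  by rewrite -(ltn_exp2l _ _ (isT : 1 < 2)); apply: leq_ltn_trans log_le _; rewrite /N; lia.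
exists (Ordinal log_lt); rewrite Cube_entE /=.
suff -> : N %/ 2 ^ trunc_log 2 N = 1 by [].
apply/eqP; rewrite eqn_leq leq_divRL ?expn_gt0 // mul1n log_le andbT.
by rewrite -ltnS ltn_divLR ?expn_gt0 // -expnS trunc_log_ltn.
Qed.

Definition ord0_elim (X : Type) (i : 'I_0) : X :=
  match i with Ordinal _ lt => False_rect X (notF lt) end.

(** * Finite limits *)

Section FiniteLimits.
Variable C : Category.

Lemma power_homE (A P B : Obj C) n (pr : 'I_n -> Hom P A) (u v : Hom B P) :
  is_power pr -> (forall i, comp (pr i) u = comp (pr i) v) -> u = v.
Proof.
move=> /(_ B (fun i => comp (pr i) v)) [w [_ Hw]] E.
by rewrite (Hw u E) (Hw v (fun=> erefl)).
Qed.

Lemma pullback_lift (A B D P : Obj C) (f : Hom A D) (g : Hom B D)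
    (p1 : Hom P A) (p2 : Hom P B) (Q : Obj C) (q1 : Hom Q A) (q2 : Hom Q B) :
  is_pullback f g p1 p2 -> comp f q1 = comp g q2 ->
  exists u : Hom Q P, comp p1 u = q1 /\ comp p2 u = q2.
Proof. by move=> [_ /(_ Q q1 q2)] H /H [u [Hu _]]; exists u. Qed.

Lemma pullback_mono (A B D P : Obj C) (f : Hom A D) (g : Hom B D)
    (p1 : Hom P A) (p2 : Hom P B) :
  is_pullback f g p1 p2 -> is_mono g -> is_mono p1.
Proof.
move=> [Hc Hu] Hg X u v E.
have E2 : comp p2 u = comp p2 v.
  by apply: Hg; rewrite !comp_assoc -Hc -!comp_assoc E.
have Hq : comp f (comp p1 v) = comp g (comp p2 v) by rewrite !comp_assoc Hc.
have [w [_ Hw]] := Hu X (comp p1 v) (comp p2 v) Hq.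
by rewrite (Hw u E E2) (Hw v erefl erefl).
Qed.

Lemma finitely_complete_power : finitely_complete C ->
  forall (A : Obj C) n, exists P (pr : 'I_n -> Hom P A), is_power pr.
Proof.
move=> [[T HT] HP] A; elim=> [|n [Pn [prn Hn]]].
  exists T, (fun i => ord0_elim _ i) => B f.
  have [u Hu] := HT B; exists u; split => [[]//|v _]; exact: Hu.
have [tP _] := HT Pn; have [tA _] := HT A.
have [Q [q1 [q2 [Hc Hu]]]] := HP _ _ _ tP tA.
exists Q, (fun i => if unlift ord_max i is Some j then comp (prn j) q1 else q2).
move=> B f.
have [un [Hun Hun']] := Hn B (fun j => f (lift ord_max j)).
have Hq : comp tP un = comp tA (f ord_max).
  by have [t Ht] := HT B; rewrite (Ht (comp tP un)) (Ht (comp tA _)).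
have [u [[Hu1 Hu2] Hu']] := Hu B un (f ord_max) Hq.
exists u; split.
  move=> i; case: (unliftP ord_max i) => [j ->|->] //.
  by rewrite -comp_assoc Hu1 Hun.
move=> v Hv; apply: Hu'; last by rewrite -Hv unlift_none.
by apply: Hun' => j; rewrite comp_assoc -Hv liftK.
Qed.

End FiniteLimits.

Section Equivalence.
Variables (C D : Category) (F : Functor C D).
Hypothesis F_full :
  forall (A B : Obj C) (g : Hom (fobj F A) (fobj F B)), exists f, fmap F f = g.
Hypothesis F_faithful :
  forall (A B : Obj C) (f f' : Hom A B), fmap F f = fmap F f' -> f = f'.
Hypothesis F_esssurj :
  forall Y : Obj D, exists (X : Obj C) (i : Hom (fobj F X) Y), is_iso i.

Lemma equivalence_terminal (T : Obj D) : is_terminal T -> exists X : Obj C, is_terminal X.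
Proof.
move=> HT; have [X [i [j [Hji Hij]]]] := F_esssurj T.
exists X => Y; have [t _] := HT (fobj F Y).
have [u Hu] := F_full (comp j t).
exists u => g; apply: F_faithful; rewrite Hu.
have [t' Ht'] := HT (fobj F Y).
have E : comp i (fmap F g) = comp i (comp j t).
  by rewrite (Ht' (comp i _)) (Ht' (comp i (comp j t))).
by have := f_equal (comp j) E; rewrite !comp_assoc Hji !comp_idl.
Qed.

Lemma equivalence_pullback (A B E : Obj C) (f : Hom A E) (g : Hom B E)
    (Q : Obj D) (q1 : Hom Q (fobj F A)) (q2 : Hom Q (fobj F B)) :
  is_pullback (fmap F f) (fmap F g) q1 q2 ->
  exists (P : Obj C) (p1 : Hom P A) (p2 : Hom P B), is_pullback f g p1 p2.
Proof.
move=> [Hc Hu]; have [X [i [j [Hji Hij]]]] := F_esssurj Q.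
have [p1 Hp1] := F_full (A := X) (B := A) (comp q1 i).
have [p2 Hp2] := F_full (A := X) (B := B) (comp q2 i).
exists X, p1, p2; split.
  by apply: F_faithful; rewrite !fmap_comp Hp1 Hp2 !comp_assoc Hc.
move=> Z z1 z2 Hz.
have Hz' : comp (fmap F f) (fmap F z1) = comp (fmap F g) (fmap F z2).
  by rewrite -!fmap_comp Hz.
have [u [[Hu1 Hu2] Hu']] := Hu _ _ _ Hz'.
have [v Hv] := F_full (A := Z) (B := X) (comp j u).
have Hv1 : comp p1 v = z1.
  by apply: F_faithful; rewrite fmap_comp Hv Hp1 -comp_assoc (comp_assoc i) Hij comp_idl.
have Hv2 : comp p2 v = z2.
  by apply: F_faithful; rewrite fmap_comp Hv Hp2 -comp_assoc (comp_assoc i) Hij comp_idl.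
exists v; split => // w Hw1 Hw2; apply: F_faithful; rewrite Hv.
have -> : u = comp i (fmap F w).
  by symmetry; apply: Hu'; rewrite comp_assoc -?Hp1 -?Hp2 -fmap_comp ?Hw1 ?Hw2.
by rewrite comp_assoc Hji comp_idl.
Qed.

End Equivalence.

Lemma equivalent_finitely_complete (C D : Category) :
  equivalent C D -> finitely_complete D -> finitely_complete C.
Proof.
move=> [F [full [faithful esssurj]]] [[T HT] HP]; split.
  exact: (equivalence_terminal full faithful esssurj HT).
move=> A B E f g; have [Q [q1 [q2 Hpb]]] := HP _ _ _ (fmap F f) (fmap F g).
exact: (equivalence_pullback full faithful esssurj Hpb).
Qed.

Lemma Cube_closed_of_M_closed (C : Category) (M : SEMatrix) (n' : nat) :
  finitely_complete C -> has_blocking_rows M n' ->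
  has_M_closed_relations C M -> has_M_closed_relations C (Cube n').
Proof.
move=> fcC [idx blocking] M_closed A P pr R r P_pow r_mono B f cube_cols.
have [E [pi E_pow]] := finitely_complete_power fcC P (rows M).
have [g [g_pr _]] := P_pow E (fun a => comp (pr a) (pi (idx a))).
have [S [s [t S_pb]]] := fcC.2 _ _ _ g r.
have S_closed := M_closed P E pi S s E_pow (pullback_mono S_pb r_mono).
pose x2 : 'I_2 := inord 1.
have [F F_pr] : exists F : 'I_(nvars M) -> Hom B P, forall v a,
    comp (pr a) (F v) = if v == rcol M (idx a) then f ord0 else f x2.
  apply: (@fin_all_exists _ (fun=> Hom B P)
    (fun v u => forall a, comp (pr a) u = if v == rcol M (idx a) then f ord0 else f x2)) => v.
  by have [u [Hu _]] := P_pow B (fun a => if v == rcol M (idx a) then f ord0 else f x2); exists u.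
have [|h Hh] := S_closed B F.
  move=> j; have [u [u_pi _]] := E_pow B (fun i => F (ent M i j)).
  have [c Hc] := Cube_column (blocking j).
  have [hc Hhc] := cube_cols c.
  have [hs [s_hs _]] : exists hs, comp s hs = u /\ comp t hs = hc.
    apply: pullback_lift S_pb _; apply: (power_homE P_pow) => a.
    rewrite comp_assoc g_pr -comp_assoc u_pi F_pr Hhc Hc.
    by case: eqP.
  by exists hs => i; rewrite s_hs u_pi.
exists (comp t h) => a.
by rewrite (comp_assoc r) -S_pb.1 !comp_assoc g_pr -!comp_assoc Hh F_pr eqxx.
Qed.

(** * Varieties *)

Lemma dep_functional_choice (I : Type) (U : I -> Type) (P : forall i, U i -> Prop) :
  (forall i, exists u, P i u) -> exists f : forall i, U i, forall i, P i (f i).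
Proof.
move=> H; exists (fun i => proj1_sig (constructive_indefinite_description _ (H i))).
by move=> i; exact: proj2_sig (constructive_indefinite_description _ (H i)).
Qed.

Section Variety.
Variable T : eq_theory.
Local Notation Sg := (eq_sig T).
Local Notation VC := (VarietyCat T).

Lemma teval_hom (X : Type) (opsX : forall o : sop Sg, ('I_(sar o) -> X) -> X)
    (B : valgebra T) (phi : X -> acar B) :
  (forall o args, phi (opsX o args) = aop B o (fun i => phi (args i))) ->
  forall rho (t : term Sg), phi (teval opsX rho t) = teval (aop B) (fun n => phi (rho n)) t.
Proof.
move=> phi_hom rho; elim=> [n|o args IH] //=; rewrite phi_hom; congr (aop B o).
by apply: functional_extensionality => i; exact: IH.
Qed.

(* Operations on X that are jointly injectively mapped, homomorphically, into
   algebras of the variety satisfy its equations: this covers subalgebras of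
   products, hence pullbacks, powers and images. *)
Definition induced_valgebra (X : Type) (opsX : forall o : sop Sg, ('I_(sar o) -> X) -> X)
    (I : Type) (A : I -> valgebra T) (phi : forall i, X -> acar (A i))
    (phi_hom : forall i o args, phi i (opsX o args) = aop (A i) o (fun k => phi i (args k)))
    (phi_inj : forall x y, (forall i, phi i x = phi i y) -> x = y) : valgebra T.
Proof.
refine (@VAlg T X opsX _) => e rho; apply: phi_inj => i.
by rewrite !(teval_hom (phi_hom i)) asat.
Defined.

Definition mkhom (A B : valgebra T) (h : acar A -> acar B)
    (h_hom : forall o args, h (aop A o args) = aop B o (fun i => h (args i))) :
  Hom (c := VC) A B := @VHom T A B h h_hom.

Lemma hom_ext (A B : valgebra T) (f g : Hom (c := VC) A B) :
  (forall x, vhfun f x = vhfun g x) -> f = g.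
Proof. by move=> H; apply: vhom_eq; apply: functional_extensionality. Qed.

Lemma hom_eqP (A B : valgebra T) (f g : Hom (c := VC) A B) :
  f = g -> forall x, vhfun f x = vhfun g x.
Proof. by move=> ->. Qed.

Lemma vhfun_comp (A B D : valgebra T) (g : Hom (c := VC) B D) (f : Hom (c := VC) A B) x :
  vhfun (comp g f) x = vhfun g (vhfun f x).
Proof. by []. Qed.

Definition unit_valg : valgebra T.
Proof.
by refine (@VAlg T unit (fun _ _ => tt) _) => *; case: (teval _ _ _); case: (teval _ _ _).
Defined.

Lemma unit_valg_terminal : is_terminal (C := VC) unit_valg.
Proof.
move=> X; exists (@mkhom X unit_valg (fun _ => tt) (fun _ _ => erefl)) => g.
by apply: hom_ext => x; case: (vhfun g x).
Qed.

Section Pullback.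
Variables (A B D : valgebra T) (f : Hom (c := VC) A D) (g : Hom (c := VC) B D).

Definition pb_car := {p : acar A * acar B | vhfun f p.1 = vhfun g p.2}.

Definition pb_op (o : sop Sg) (args : 'I_(sar o) -> pb_car) : pb_car.
Proof.
refine (exist _ (aop A o (fun i => (proj1_sig (args i)).1),
                 aop B o (fun i => (proj1_sig (args i)).2)) _).
rewrite /= !vhmor; congr (aop D o); apply: functional_extensionality => i.
exact: proj2_sig (args i).
Defined.

Definition pb_proj (b : bool) : pb_car -> acar (if b then A else B) :=
  if b as b' return pb_car -> acar (if b' then A else B)
  then fun x => (proj1_sig x).1 else fun x => (proj1_sig x).2.

Lemma pb_inj (x y : pb_car) : (forall b, pb_proj b x = pb_proj b y) -> x = y.
Proof.
move: x y => [[x1 x2] Hx] [[y1 y2] Hy] H.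
have /= E1 := H true; have /= E2 := H false; subst.
by congr exist; apply: proof_irrelevance.
Qed.

Definition pb_valg : valgebra T.
Proof.
by refine (@induced_valgebra pb_car pb_op bool (fun b => if b then A else B) pb_proj _ pb_inj);
  case.
Defined.

Definition pb1 : Hom (c := VC) pb_valg A :=
  @mkhom pb_valg A (fun x => (proj1_sig x).1) (fun _ _ => erefl).
Definition pb2 : Hom (c := VC) pb_valg B :=
  @mkhom pb_valg B (fun x => (proj1_sig x).2) (fun _ _ => erefl).

Lemma pb_valg_pullback : is_pullback (C := VC) f g pb1 pb2.
Proof.
split=> [|Q q1 q2 Hq]; first by apply: hom_ext => x; exact: proj2_sig x.
pose u (x : acar Q) : pb_car := exist _ (vhfun q1 x, vhfun q2 x) (hom_eqP Hq x).
have u_hom o args : u (aop Q o args) = aop pb_valg o (fun i => u (args i)).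
  by apply: pb_inj; case; rewrite /= vhmor.
exists (@mkhom Q pb_valg u u_hom); split; first by split; apply: hom_ext.
move=> v Hv1 Hv2; apply: hom_ext => x; apply: pb_inj.
by case; rewrite /= -?Hv1 -?Hv2.
Qed.

End Pullback.

Lemma pullback_cover (A B D P : valgebra T) (f : Hom (c := VC) A D) (g : Hom (c := VC) B D)
    (p1 : Hom (c := VC) P A) (p2 : Hom (c := VC) P B) :
  is_pullback f g p1 p2 -> forall a b, vhfun f a = vhfun g b ->
  exists x, vhfun p1 x = a /\ vhfun p2 x = b.
Proof.
move=> Hpb a b Hab.
have [w [w1 w2]] := pullback_lift Hpb (pb_valg_pullback f g).1.
by exists (vhfun w (exist _ (a, b) Hab)); rewrite -!vhfun_comp w1 w2.
Qed.

Lemma variety_finitely_complete : finitely_complete VC.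
Proof.
split; first by exists unit_valg; exact: unit_valg_terminal.
by move=> A B D f g; exists (pb_valg f g), (pb1 f g), (pb2 f g); exact: pb_valg_pullback.
Qed.

Section Power.
Variables (A : valgebra T) (n : nat).

Definition pow_valg : valgebra T :=
  @induced_valgebra ('I_n -> acar A) (fun o args a => aop A o (fun k => args k a))
    'I_n (fun=> A) (fun a x => x a) (fun _ _ _ => erefl)
    (fun x y H => functional_extensionality _ _ H).

Definition pow_proj (a : 'I_n) : Hom (c := VC) pow_valg A :=
  @mkhom pow_valg A (fun x => x a) (fun _ _ => erefl).

Definition pow_tuple (B : valgebra T) (fs : 'I_n -> Hom (c := VC) B A) :
  Hom (c := VC) B pow_valg.
Proof.
refine (@mkhom B pow_valg (fun x a => vhfun (fs a) x) _) => o args.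
by apply: functional_extensionality => a /=; rewrite vhmor.
Defined.

Lemma pow_valg_power : is_power pow_proj.
Proof.
move=> B fs; exists (pow_tuple fs); split=> [a|v Hv]; first exact: hom_ext.
apply: hom_ext => x; apply: functional_extensionality => a.
by rewrite /= -(Hv a).
Qed.

End Power.

Section Subalgebra.
Variables (B : valgebra T) (S : acar B -> Prop).
Hypothesis S_closed : forall o args, (forall k, S (args k)) -> S (aop B o args).

Definition sub_car := {x : acar B | S x}.

Lemma sub_inj (x y : sub_car) : (forall _ : unit, proj1_sig x = proj1_sig y) -> x = y.
Proof.
move: x y => [x Hx] [y Hy] /(_ tt) /= E; subst.
by congr exist; apply: proof_irrelevance.
Qed.

Definition sub_valg : valgebra T :=
  @induced_valgebra sub_car
    (fun o args => exist _ (aop B o (fun k => proj1_sig (args k)))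
                           (S_closed (fun k => proj2_sig (args k))))
    unit (fun=> B) (fun _ x => proj1_sig x) (fun _ _ _ => erefl) sub_inj.

Definition sub_incl : Hom (c := VC) sub_valg B :=
  @mkhom sub_valg B (fun x => proj1_sig x) (fun _ _ => erefl).

Definition sub_corestr (A : valgebra T) (w : Hom (c := VC) A B)
    (wS : forall x, S (vhfun w x)) : Hom (c := VC) A sub_valg.
Proof.
refine (@mkhom A sub_valg (fun x => exist _ (vhfun w x) (wS x)) _) => o args.
by apply: sub_inj => _ /=; rewrite vhmor.
Defined.

End Subalgebra.

Lemma injective_mono (A B : valgebra T) (r : Hom (c := VC) A B) :
  (forall x y, vhfun r x = vhfun r y -> x = y) -> is_mono r.
Proof. by move=> r_inj X u v E; apply: hom_ext => x; apply: r_inj; rewrite -!vhfun_comp E. Qed.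

Lemma mono_injective (A B : valgebra T) (r : Hom (c := VC) A B) :
  is_mono r -> forall x y, vhfun r x = vhfun r y -> x = y.
Proof.
move=> r_mono x y Exy.
have /hom_eqP E := r_mono _ _ _ (pb_valg_pullback r r).1.
exact: E (exist _ (x, y) Exy).
Qed.

Lemma power_jointly_injective (A P : valgebra T) n (pr : 'I_n -> Hom (c := VC) P A) :
  is_power pr -> forall x y, (forall i, vhfun (pr i) x = vhfun (pr i) y) -> x = y.
Proof.
move=> P_pow x y Exy.
have [u [u_pr _]] := P_pow _ (@pow_proj A n).
have wu : comp u (pow_tuple pr) = idm (c := VC) P.
  by apply: (power_homE P_pow) => i; rewrite comp_assoc u_pr comp_idr; apply: hom_ext.
rewrite -[x](hom_eqP wu) -[y](hom_eqP wu) !vhfun_comp; congr (vhfun u _).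
exact: functional_extensionality.
Qed.

Section Image.
Variables (A B : valgebra T) (f : Hom (c := VC) A B).

Definition in_image (y : acar B) : Prop := exists a, vhfun f a = y.

Lemma in_image_closed o args : (forall k, in_image (args k)) -> in_image (aop B o args).
Proof.
move=> /dep_functional_choice [pre Hpre]; exists (aop A o pre); rewrite vhmor; congr (aop B o).
exact: functional_extensionality.
Qed.

Definition image_valg : valgebra T := sub_valg in_image_closed.

Definition image_map : Hom (c := VC) A image_valg :=
  sub_corestr in_image_closed (fun a => ex_intro _ a erefl).

Lemma image_map_surjective y : exists a, vhfun image_map a = y.
Proof. by case: y => y [a Ha]; exists a; apply: sub_inj => _ /=. Qed.

End Image.

Lemma coequalizer_of_surjective (A B K : valgebra T) (q : Hom (c := VC) A B)
    (a b : Hom (c := VC) K A) :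
  (forall y, exists x, vhfun q x = y) -> comp q a = comp q b ->
  (forall x y, vhfun q x = vhfun q y -> exists k, vhfun a k = x /\ vhfun b k = y) ->
  is_coequalizer a b q.
Proof.
move=> /dep_functional_choice [pre q_pre] qab ker_cover; split=> // Z z /hom_eqP zab.
have z_ker x y : vhfun q x = vhfun q y -> vhfun z x = vhfun z y.
  by move=> /ker_cover [k [<- <-]]; exact: zab.
have zpre_hom o args :
    vhfun z (pre (aop B o args)) = aop Z o (fun i => vhfun z (pre (args i))).
  rewrite -vhmor; apply: z_ker; rewrite q_pre vhmor; congr (aop B o).
  by apply: functional_extensionality => i; rewrite q_pre.
exists (@mkhom B Z (fun y => vhfun z (pre y)) zpre_hom); split.
  by apply: hom_ext => x /=; apply: z_ker; rewrite q_pre.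
move=> v Hv; apply: hom_ext => y /=.
by rewrite -{1}(q_pre y) -vhfun_comp Hv.
Qed.

Lemma regular_epi_surjective (A B : valgebra T) (e : Hom (c := VC) A B) :
  is_regular_epi e -> forall y, exists x, vhfun e x = y.
Proof.
move=> [R [a [b [eab e_univ]]]].
have image_ab : comp (image_map e) a = comp (image_map e) b.
  by apply: hom_ext => x; apply: sub_inj => _; exact: hom_eqP eab x.
have [u [u_e _]] := e_univ _ _ image_ab.
have [v [_ e_unique]] := e_univ _ _ eab.
have incl_u : comp (sub_incl (@in_image_closed A B e)) u = idm (c := VC) B.
  rewrite (e_unique (comp (sub_incl _) u)); last by rewrite -comp_assoc u_e; apply: hom_ext.
  by rewrite (e_unique (idm (c := VC) B)) // comp_idl.
by move=> y; have /= <- := hom_eqP incl_u y; exact: proj2_sig (vhfun u y).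
Qed.

Lemma variety_regular : regular VC.
Proof.
split; first exact: variety_finitely_complete.
split=> [A B f K k1 k2 Hpb | A B D e g P p1 p2 /regular_epi_surjective e_surj Hpb].
  exists (image_valg f), (image_map f); apply: coequalizer_of_surjective.
  - exact: image_map_surjective.
  - by apply: hom_ext => x; apply: sub_inj => _; exact: hom_eqP Hpb.1 x.
  - by move=> x y /(f_equal (@proj1_sig _ _)); exact: (pullback_cover Hpb).
exists (pb_valg p2 p2), (pb1 p2 p2), (pb2 p2 p2); apply: coequalizer_of_surjective.
- move=> y; have [x Hx] := e_surj (vhfun g y).
  by have [w [_ Hw]] := pullback_cover Hpb Hx; exists w.
- exact: (pb_valg_pullback p2 p2).1.
- by move=> x y Exy; exists (exist _ (x, y) Exy).
Qed.

End Variety.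

(** * The pointed variety V_M *)

Section PointedVM.
Variable M : SEMatrix.

(* V_M extended by a constant (operation [false]; [true] is p), which makes
   the variety pointed as soon as M has a row. *)
Definition VM0_sig : signature := @Sig bool (fun b => if b then lcols M else 0).

Definition VM0_theory : eq_theory :=
  @EqTh VM0_sig 'I_(rows M)
    (fun i => @tapp VM0_sig true (fun j : 'I_(lcols M) => tvar VM0_sig (ent M i j)))
    (fun i => tvar VM0_sig (rcol M i)).

Local Notation VC := (VarietyCat VM0_theory).

Definition vconst (X : valgebra VM0_theory) : acar X := aop X false (fun i => ord0_elim _ i).

Lemma aop_vconst (X : valgebra VM0_theory) (args : 'I_0 -> acar X) :
  aop X false args = vconst X.
Proof. by congr (aop X false); apply: functional_extensionality => -[]. Qed.

Lemma VM0_identity (X : valgebra VM0_theory) (F : 'I_(nvars M) -> acar X) i :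
  aop X true (fun j => F (ent M i j)) = F (rcol M i).
Proof.
pose rho n := if insub n is Some v then F v else vconst X.
have rhoE (v : 'I_(nvars M)) : rho v = F v by rewrite /rho valK.
have /= := @asat _ X i rho; rewrite rhoE => <-; congr (aop X true).
by apply: functional_extensionality => j; rewrite rhoE.
Qed.

Lemma VM0_pointed : 1 <= rows M -> pointed VC.
Proof.
move=> rows_gt0; exists (unit_valg VM0_theory); split; last exact: unit_valg_terminal.
move=> X; have vconst_hom (o : sop VM0_sig) (args : 'I_(sar o) -> unit) :
    vconst X = aop X o (fun=> vconst X).
  case: o args => args; rewrite ?aop_vconst //.
  by rewrite (VM0_identity (fun=> vconst X) (Ordinal rows_gt0)).
exists (@mkhom _ (unit_valg _) X (fun=> vconst X) vconst_hom) => g.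
apply: hom_ext => -[] /=.
by rewrite -[tt]/(aop (unit_valg VM0_theory) false (fun i => ord0_elim _ i)) vhmor aop_vconst.
Qed.

Lemma VM0_M_closed : has_M_closed_relations VC M.
Proof.
move=> A P pr R r P_pow r_mono B f /fin_all_exists [hs Hhs].
pose h x := aop R true (fun j => vhfun (hs j) x).
have h_pr x i : vhfun (pr i) (vhfun r (h x)) = vhfun (f (rcol M i)) x.
  rewrite !vhmor -(VM0_identity (fun v => vhfun (f v) x)); congr (aop A true).
  by apply: functional_extensionality => j; exact: hom_eqP (Hhs j i) x.
have h_hom o args : h (aop B o args) = aop R o (fun k => h (args k)).
  apply: (mono_injective r_mono); apply: (power_jointly_injective P_pow) => i.
  rewrite h_pr !vhmor; congr (aop A o).
  by apply: functional_extensionality => k; rewrite h_pr.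
by exists (@mkhom _ B R h h_hom) => i; apply: hom_ext => x; exact: h_pr.
Qed.

Section NotCubeClosed.
Variable n' : nat.
Hypotheses (n'_ge2 : 2 <= n') (rows_gt0 : 1 <= rows M).
Hypothesis no_blocking : ~ has_blocking_rows M n'.

(* The constant is 1, so that the constant map 1 is a homomorphism. *)
Definition bool_op (o : sop VM0_sig) : ('I_(sar o) -> bool) -> bool :=
  match o return ('I_(sar (s := VM0_sig) o) -> bool) -> bool with
  | true => fun args => agreement_op [ffun j => args j]
  | false => fun=> true
  end.

Definition bool_VM0 : valgebra VM0_theory.
Proof.
refine (@VAlg VM0_theory bool bool_op _) => i rho /=.
rewrite -(agreement_op_VM n'_ge2 no_blocking (fun v => rho (val v))).
by congr agreement_op; apply/ffunP => j; rewrite !ffunE.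
Defined.

Definition const_true : Hom (c := VC) bool_VM0 bool_VM0.
Proof.
refine (@mkhom _ bool_VM0 bool_VM0 (fun=> true) _) => -[] args //=.
by rewrite (agreement_op_VM n'_ge2 no_blocking (fun=> true) (Ordinal rows_gt0)).
Defined.

Definition nonzero (x : acar (pow_valg bool_VM0 n')) : Prop := exists a : 'I_n', x a.

Lemma nonzero_closed o (args : 'I_(sar o) -> acar (pow_valg bool_VM0 n')) :
  (forall k, nonzero (args k)) -> nonzero (aop (pow_valg bool_VM0 n') o args).
Proof.
case: o args => args args_nz.
  exact: agreement_op_compatible no_blocking _ args_nz.
by exists (Ordinal (ltnW n'_ge2)).
Qed.

(* Send x_1 to the identity and x_2 to the constant 1: every left column of
   Cube_n' contains x_2, hence yields nonzero tuples, while the right column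
   sends 0 to the zero tuple. *)
Lemma VM0_not_Cube_closed : ~ has_M_closed_relations VC (Cube n').
Proof.
move=> Cube_closed.
have Rn_mono : is_mono (sub_incl nonzero_closed).
  by apply: injective_mono => x y Exy; apply: sub_inj.
pose f (c : 'I_2) := if c == ord0 then idm (c := VC) bool_VM0 else const_true.
have [|h Hh] := Cube_closed _ _ _ _ _ (@pow_valg_power _ bool_VM0 n') Rn_mono bool_VM0 f.
  move=> c; have [a Ha] := Cube_column_x2 c.
  have col_nz x : nonzero (vhfun (pow_tuple (fun a => f (ent (Cube n') a c))) x).
    exists a; change (vhfun (f (ent (Cube n') a c)) x); rewrite Ha /f.
    by case: eqP => // /(f_equal val); rewrite /= inordK.
  by exists (sub_corestr nonzero_closed col_nz) => i; apply: hom_ext.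
have [a Ha] := proj2_sig (vhfun h false).
by have /= := hom_eqP (Hh a) false; rewrite Ha.
Qed.

End NotCubeClosed.
End PointedVM.

(** * Essentially algebraic categories *)

Definition some_witness (U : Type) (P : U -> Prop) : option U :=
  match excluded_middle_informative (exists u, P u) with
  | left H => Some (proj1_sig (constructive_indefinite_description _ H))
  | right _ => None
  end.

Lemma some_witness_some U (P : U -> Prop) u : some_witness P = Some u -> P u.
Proof.
rewrite /some_witness; case: excluded_middle_informative => // H [<-].
exact: proj2_sig (constructive_indefinite_description _ H).
Qed.

Lemma some_witness_none U (P : U -> Prop) : some_witness P = None -> ~ exists u, P u.
Proof. by rewrite /some_witness; case: excluded_middle_informative. Qed.

Section PevalInversion.
Variables (Sg : ea_signature) (A : ea_palg Sg) (V : ea_sort Sg -> Type)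
  (rho : forall s, V s -> pcar A s).

Definition peval_inv_spec (s : ea_sort Sg) (t : eterm V s) : pcar A s -> Prop :=
  match t in eterm _ s0 return pcar A s0 -> Prop with
  | evar s v => fun b => b = rho v
  | eapp o args => fun b => exists vals : (forall i, pcar A (ea_dom i)),
      (forall i, peval rho (args i) (vals i)) /\ pop A o vals = Some b
  end.

Lemma peval_inv s (t : eterm V s) b : peval rho t b -> peval_inv_spec t b.
Proof. by case=> [s' v|o args vals b' Hv Hp] //=; exists vals. Qed.

End PevalInversion.

Section ModelCategory.
Variable T : ea_theory.
Local Notation Sg := (ea_sig T).
Local Notation MC := (ModelCat T).
Local Notation sort := (ea_sort Sg).

(* The analogue of [induced_valgebra]: a sorted family X jointly injectively
   mapped into models, and closed under every operation that is defined on
   the images, carries the induced partial operations and is again a model. *)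
Section InducedModel.
Variables (X : sort -> Type) (I : Type) (A : I -> ea_model T)
  (phi : forall i s, X s -> pcar (em_alg (A i)) s).
Hypothesis phi_inj : forall s (x y : X s), (forall i, phi i x = phi i y) -> x = y.
Hypothesis phi_closed : forall o (a : forall k : ea_ar o, X (ea_dom k)),
  (forall i, exists c, pop (em_alg (A i)) o (fun k => phi i (a k)) = Some c) ->
  exists b, forall i, pop (em_alg (A i)) o (fun k => phi i (a k)) = Some (phi i b).

Definition induced_palg : ea_palg Sg :=
  @EAPAlg Sg X (fun o a => some_witness (fun b : X (ea_cod o) =>
     forall i, pop (em_alg (A i)) o (fun k => phi i (a k)) = Some (phi i b))).

Lemma induced_popE o a b : pop induced_palg o a = Some b ->
  forall i, pop (em_alg (A i)) o (fun k => phi i (a k)) = Some (phi i b).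
Proof. exact: some_witness_some. Qed.

Lemma induced_pop_defined o a :
  (forall i, exists c, pop (em_alg (A i)) o (fun k => phi i (a k)) = Some c) ->
  pop induced_palg o a <> None.
Proof. by move=> /phi_closed H /some_witness_none. Qed.

Lemma induced_peval_proj V (rho : forall s, V s -> X s) s (t : eterm V s) b :
  peval (A := induced_palg) rho t b ->
  forall i, peval (A := em_alg (A i)) (fun s v => phi i (rho s v)) t (phi i b).
Proof.
elim=> [s' v|o args vals b' _ IH Hp] i; first by constructor.
by econstructor; [move=> k; exact: IH k i | exact: induced_popE Hp i].
Qed.

Lemma induced_peval_lift V (rho : forall s, V s -> X s) s (t : eterm V s)
    (c : forall i, pcar (em_alg (A i)) s) :
  (forall i, peval (A := em_alg (A i)) (fun s v => phi i (rho s v)) t (c i)) ->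
  exists b, peval (A := induced_palg) rho t b /\ forall i, phi i b = c i.
Proof.
elim: t c => [s' v|o args IH] c Hc.
  exists (rho s' v); split; first by constructor.
  by move=> i; have /= -> := peval_inv (Hc i).
have [vals Hvals] := dep_functional_choice (fun i => peval_inv (Hc i)).
have args_lift k : exists bk : X (ea_dom k),
    peval (A := induced_palg) rho (args k) bk /\ forall i, phi i bk = vals i k.
  by apply: IH => i; exact: (Hvals i).1 k.
have [bs Hbs] := dep_functional_choice args_lift.
have phi_bs i : (fun k => phi i (bs k)) = vals i.
  by apply: functional_extensionality_dep => k; exact: (Hbs k).2 i.
case E: (pop induced_palg o bs) => [b|]; last first.
  exfalso; apply: (induced_pop_defined (a := bs)) E => i.
  by exists (c i); rewrite phi_bs (Hvals i).2.
exists b; split; first by econstructor; [move=> k; exact: (Hbs k).1 | exact: E].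
by move=> i; have := induced_popE E i; rewrite phi_bs (Hvals i).2 => -[].
Qed.

Lemma std_assign_phi i o (a : forall k : ea_ar o, X (ea_dom k)) :
  std_assign (A := em_alg (A i)) (fun k => phi i (a k)) =
  (fun s v => phi i (std_assign (A := induced_palg) a v)).
Proof.
apply: functional_extensionality_dep => s; apply: functional_extensionality => -[k e].
by rewrite /std_assign /=; case: s / e.
Qed.

Lemma induced_Def_of_pop o a d : ~ ea_total T o -> pop induced_palg o a <> None ->
  holds_def (std_assign (A := induced_palg) a) (ea_Def T o d).
Proof.
move=> o_partial; case E: (pop induced_palg o a) => [b|] // _.
have Hd i : holds_def (std_assign (A := em_alg (A i)) (fun k => phi i (a k))) (ea_Def T o d).
  apply: (proj1 ((em_model (A i)).2.1 o _ o_partial)).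
  by rewrite (induced_popE E i).
have [c Hc] := dep_functional_choice Hd.
have [b1 [Hb1 E1]] := @induced_peval_lift _ (std_assign (A := induced_palg) a) _ _ c
  (fun i => eq_ind _ (fun r => peval r _ _) (Hc i).1 _ (std_assign_phi i a)).
have [b2 [Hb2 E2]] := @induced_peval_lift _ (std_assign (A := induced_palg) a) _ _ c
  (fun i => eq_ind _ (fun r => peval r _ _) (Hc i).2 _ (std_assign_phi i a)).
exists b1; split => //.
by have -> : b1 = b2 by apply: phi_inj => i; rewrite E1 E2.
Qed.

Lemma induced_pop_of_Def o a : ~ ea_total T o ->
  (forall d, holds_def (std_assign (A := induced_palg) a) (ea_Def T o d)) ->
  pop induced_palg o a <> None.
Proof.
move=> o_partial Hd; apply: induced_pop_defined => i.
have Hd' d : holds_def (std_assign (A := em_alg (A i)) (fun k => phi i (a k))) (ea_Def T o d).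
  have [b [H1 H2]] := Hd d; exists (phi i b); rewrite std_assign_phi.
  by split; [exact: induced_peval_proj H1 i | exact: induced_peval_proj H2 i].
have := (proj2 ((em_model (A i)).2.1 o _ o_partial)) Hd'.
by case: (pop _ o _) => [c _|//]; exists c.
Qed.

Lemma induced_is_model : is_ea_model induced_palg.
Proof.
split; last split.
- move=> o a o_total; apply: induced_pop_defined => i.
  case E: (pop (em_alg (A i)) o (fun k => phi i (a k))) => [c|]; first by exists c.
  by have := (em_model (A i)).1 o _ o_total E.
- move=> o a o_partial; split => [|/(induced_pop_of_Def o_partial)//].
  by move=> Ha d; exact: induced_Def_of_pop.
- move=> e rho b1 b2 H1 H2; apply: phi_inj => i.
  exact: (em_model (A i)).2.2 e _ _ _ (induced_peval_proj H1 i) (induced_peval_proj H2 i).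
Qed.

Definition induced_model : ea_model T := @EAMod T induced_palg induced_is_model.

Definition induced_proj i : Hom (c := MC) induced_model (A i) :=
  @EAHom T induced_model (A i) (phi i) (fun o a b H => induced_popE H i).

Definition induced_lift (Q : ea_model T) (h : forall s, pcar (em_alg Q) s -> X s)
    (h_hom : forall i o a b, pop (em_alg Q) o a = Some b ->
       pop (em_alg (A i)) o (fun k => phi i (h _ (a k))) = Some (phi i (h _ b))) :
  Hom (c := MC) Q induced_model.
Proof.
refine (@EAHom T Q induced_model h _) => o a b Hab.
case E: (pop induced_palg o (fun k => h _ (a k))) => [u|].
  congr Some; apply: phi_inj => i.
  by have := induced_popE E i; rewrite (h_hom i o a b Hab) => -[].
exfalso; apply: (induced_pop_defined (a := fun k => h _ (a k))) E => i.
by exists (phi i (h _ b)); exact: h_hom.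
Defined.

End InducedModel.

Lemma ea_hom_ext (A B : ea_model T) (f g : Hom (c := MC) A B) :
  (forall s x, ehfun f (s := s) x = ehfun g x) -> f = g.
Proof.
move=> H; apply: ea_hom_eq; apply: functional_extensionality_dep => s.
exact: functional_extensionality.
Qed.

Lemma ea_hom_eqP (A B : ea_model T) (f g : Hom (c := MC) A B) :
  f = g -> forall s x, ehfun f (s := s) x = ehfun g x.
Proof. by move=> ->. Qed.

Definition empty_family (i : Empty_set) : ea_model T := match i with end.

Definition empty_proj (i : Empty_set) : forall s, unit -> pcar (em_alg (empty_family i)) s :=
  match i with end.

Lemma unit_inj s (x y : unit) : (forall i, empty_proj i s x = empty_proj i s y) -> x = y.
Proof. by case: x; case: y. Qed.

Lemma unit_closed o (a : forall k : ea_ar o, unit) :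
  (forall i, exists c, pop (em_alg (empty_family i)) o (fun k => empty_proj i _ (a k)) = Some c) ->
  exists b, forall i,
    pop (em_alg (empty_family i)) o (fun k => empty_proj i _ (a k)) = Some (empty_proj i _ b).
Proof. by exists tt; case. Qed.

Definition unit_model : ea_model T := induced_model unit_inj unit_closed.

Lemma unit_model_terminal : is_terminal (C := MC) unit_model.
Proof.
move=> Q.
exists (induced_lift unit_inj unit_closed (h := fun _ _ => tt) (fun i => match i with end)).
by move=> g; apply: ea_hom_ext => s x; case: (ehfun g x).
Qed.

Section Pullback.
Variables (A B D : ea_model T) (f : Hom (c := MC) A D) (g : Hom (c := MC) B D).

Definition pb_sorted (s : sort) :=
  {p : pcar (em_alg A) s * pcar (em_alg B) s | ehfun f p.1 = ehfun g p.2}.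
Definition pb_factor (b : bool) : ea_model T := if b then A else B.
Definition pb_sproj (b : bool) (s : sort) (x : pb_sorted s) : pcar (em_alg (pb_factor b)) s :=
  if b as b' return pcar (em_alg (pb_factor b')) s then (proj1_sig x).1 else (proj1_sig x).2.

Lemma pb_sproj_inj s (x y : pb_sorted s) : (forall b, pb_sproj b x = pb_sproj b y) -> x = y.
Proof.
move: x y => [[x1 x2] Hx] [[y1 y2] Hy] H.
have /= E1 := H true; have /= E2 := H false; subst.
by congr exist; apply: proof_irrelevance.
Qed.

Lemma pb_sproj_closed o (a : forall k : ea_ar o, pb_sorted (ea_dom k)) :
  (forall i, exists c, pop (em_alg (pb_factor i)) o (fun k => pb_sproj i (a k)) = Some c) ->
  exists b, forall i,
    pop (em_alg (pb_factor i)) o (fun k => pb_sproj i (a k)) = Some (pb_sproj i b).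
Proof.
move=> H; have /= [cA HA] := H true; have /= [cB HB] := H false.
have fg_a : (fun k => ehfun f (proj1_sig (a k)).1) = (fun k => ehfun g (proj1_sig (a k)).2).
  by apply: functional_extensionality_dep => k; exact: proj2_sig (a k).
have fg_c : ehfun f cA = ehfun g cB.
  by have := ehmor f HA; rewrite fg_a (ehmor g HB) => -[].
by exists (exist _ (cA, cB) fg_c); case.
Qed.

Definition pb_model : ea_model T := induced_model pb_sproj_inj pb_sproj_closed.
Definition pb_mproj1 : Hom (c := MC) pb_model A := induced_proj pb_sproj_inj pb_sproj_closed true.
Definition pb_mproj2 : Hom (c := MC) pb_model B := induced_proj pb_sproj_inj pb_sproj_closed false.

Lemma pb_model_pullback : is_pullback (C := MC) f g pb_mproj1 pb_mproj2.
Proof.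
split=> [|Q q1 q2 Hq]; first by apply: ea_hom_ext => s x; exact: proj2_sig x.
pose u (s : sort) (x : pcar (em_alg Q) s) : pb_sorted s :=
  exist _ (ehfun q1 x, ehfun q2 x) (ea_hom_eqP Hq x).
have u_hom i o a b : pop (em_alg Q) o a = Some b ->
    pop (em_alg (pb_factor i)) o (fun k => pb_sproj i (u _ (a k))) = Some (pb_sproj i (u _ b)).
  by case: i => Hab /=; apply: ehmor.
exists (induced_lift pb_sproj_inj pb_sproj_closed u_hom); split; first by split; exact: ea_hom_ext.
move=> v Hv1 Hv2; apply: ea_hom_ext => s x; apply: pb_sproj_inj.
by case; rewrite /= -?Hv1 -?Hv2.
Qed.

End Pullback.

Lemma model_finitely_complete : finitely_complete MC.
Proof.
split; first by exists unit_model; exact: unit_model_terminal.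
by move=> A B D f g; exists (pb_model f g), (pb_mproj1 f g), (pb_mproj2 f g);
  exact: pb_model_pullback.
Qed.

End ModelCategory.

Definition id_functor (C : Category) : Functor C C :=
  @Fun C C (fun X => X) (fun A B f => f) (fun _ => erefl) (fun _ _ _ _ _ => erefl).

Lemma variety_algebraic (T : eq_theory) : cls_alg (VarietyCat T).
Proof.
exists T, (id_functor (VarietyCat T)); split=> [A B g|]; first by exists g.
by split=> // Y; exists Y, (idm Y), (idm Y); rewrite comp_idl.
Qed.

Section VM0EssentiallyAlgebraic.
Variable M : SEMatrix.
Local Notation VC := (VarietyCat (VM0_theory M)).

Definition VM0_ea_sig : ea_signature :=
  @EASig unit bool (fun o => 'I_(sar (s := VM0_sig M) o)) (fun _ _ => tt) (fun _ => tt).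

Local Notation var := (fun _ : unit => 'I_(nvars M)).

Definition VM0_ea_eqn (i : 'I_(rows M)) : ea_equation (Sg := VM0_ea_sig) var :=
  @EAEq VM0_ea_sig var tt
    (@eapp VM0_ea_sig var true (fun j => @evar VM0_ea_sig var tt (ent M i j)))
    (@evar VM0_ea_sig var tt (rcol M i)).

Definition VM0_ea_theory : ea_theory :=
  @EATh VM0_ea_sig (fun _ => True) 'I_(rows M) (fun _ _ => 'I_(nvars M)) VM0_ea_eqn
    (fun _ => Empty_set) (fun o d => match d with end) (fun o d => match d with end).

Local Notation MC := (ModelCat VM0_ea_theory).

Definition valg_palg (X : valgebra (VM0_theory M)) : ea_palg VM0_ea_sig :=
  @EAPAlg VM0_ea_sig (fun _ => acar X) (fun o a => Some (aop X o a)).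

Lemma valg_is_model (X : valgebra (VM0_theory M)) :
  is_ea_model (T := VM0_ea_theory) (valg_palg X).
Proof.
split=> [//|]; split=> [o a o_partial|i rho b1 b2 H1 H2]; first by exfalso; apply: o_partial.
have [vals [Hv [<-]]] := peval_inv H1; have /= -> := peval_inv H2.
rewrite -(VM0_identity (X := X) (rho tt)); congr (aop X true).
by apply: functional_extensionality => j; exact: peval_inv (Hv j).
Qed.

Definition valg_model (X : valgebra (VM0_theory M)) : ea_model VM0_ea_theory :=
  @EAMod VM0_ea_theory (valg_palg X) (valg_is_model X).

Definition valg_model_map (X Y : valgebra (VM0_theory M)) (f : Hom (c := VC) X Y) :
  Hom (c := MC) (valg_model X) (valg_model Y).
Proof.
by refine (@EAHom _ (valg_model X) (valg_model Y) (fun s x => vhfun f x) _) => o a b [<-] /=;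
  rewrite vhmor.
Defined.

Definition valg_to_model : Functor VC MC.
Proof. by refine (@Fun VC MC valg_model valg_model_map _ _) => *; apply: ea_hom_eq. Defined.

Section ModelToAlgebra.
Variable Y : ea_model VM0_ea_theory.

Definition total_op (o : bool) (a : 'I_(sar (s := VM0_sig M) o) -> pcar (em_alg Y) tt) :
  pcar (em_alg Y) tt :=
  match pop (em_alg Y) o a as x return x <> None -> pcar (em_alg Y) tt with
  | Some v => fun _ => v
  | None => fun H => False_rect _ (H erefl)
  end ((em_model Y).1 o a I).

Lemma total_opE o a : pop (em_alg Y) o a = Some (total_op a).
Proof. by rewrite /total_op; move: ((em_model Y).1 o a I); case: (pop _ o a). Qed.

Definition to_sort (s : unit) : pcar (em_alg Y) tt -> pcar (em_alg Y) s :=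
  match s with tt => id end.
Definition from_sort (s : unit) : pcar (em_alg Y) s -> pcar (em_alg Y) tt :=
  match s with tt => id end.

Definition model_valg : valgebra (VM0_theory M).
Proof.
refine (@VAlg (VM0_theory M) (pcar (em_alg Y) tt) total_op _) => i rho /=.
pose rho' s (v : 'I_(nvars M)) := to_sort s (rho v).
apply: ((em_model Y).2.2 i rho' (total_op (o := true) (fun j => rho (ent M i j)))
  (rho (rcol M i))); last exact: (@pev_var VM0_ea_sig (em_alg Y) var rho' tt).
apply: (@pev_app VM0_ea_sig (em_alg Y) var rho' true _ (fun j => rho (ent M i j)));
  last exact: total_opE.
by move=> j; exact: (@pev_var VM0_ea_sig (em_alg Y) var rho' tt).
Defined.

Definition model_valg_iso : Hom (c := MC) (valg_model model_valg) Y.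
Proof.
by refine (@EAHom _ (valg_model model_valg) Y to_sort _) => o a b [<-]; exact: total_opE.
Defined.

Definition model_valg_iso_inv : Hom (c := MC) Y (valg_model model_valg).
Proof.
refine (@EAHom _ Y (valg_model model_valg) from_sort _) => o a b /=.
by rewrite total_opE => -[->].
Defined.

Lemma model_valg_iso_is_iso : is_iso model_valg_iso.
Proof.
by exists model_valg_iso_inv; split; apply: ea_hom_ext => -[].
Qed.

End ModelToAlgebra.

Lemma VM0_essentially_algebraic : cls_essalg VC.
Proof.
exists VM0_ea_theory, valg_to_model; split; last split.
- move=> A B g.
  have g_hom o args :
      @ehfun _ _ _ g tt (aop A o args) = aop B o (fun i => @ehfun _ _ _ g tt (args i)).
    by have [] := ehmor g (o := o) (a := args) (b := aop A o args) erefl.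
  by exists (mkhom g_hom); apply: ea_hom_ext => -[].
- move=> A B f f' /ea_hom_eqP E; apply: hom_ext => x; exact: E tt x.
- by move=> Y; exists (model_valg Y), (model_valg_iso Y); exact: model_valg_iso_is_iso.
Qed.

End VM0EssentiallyAlgebraic.

(** * The ten classes *)

Section Classes.
Variables (M : SEMatrix) (n' : nat).
Hypotheses (rows_gt0 : 1 <= rows M) (n'_ge2 : 2 <= n').
Local Notation VM0 := (VarietyCat (VM0_theory M)).

Lemma implies_Cube_iff (K : Category -> Prop) :
  (forall C, K C -> finitely_complete C) -> K VM0 ->
  implies_in K M (Cube n') <-> has_blocking_rows M n'.
Proof.
move=> K_fc K_VM0; split=> [M_Cube|blocking C KC].
  apply: NNPP => nB; apply: (VM0_not_Cube_closed n'_ge2 rows_gt0 nB).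
  exact: M_Cube K_VM0 (@VM0_M_closed M).
exact: Cube_closed_of_M_closed (K_fc C KC) blocking.
Qed.

Lemma implies_Cube_iff_pt (K : Category -> Prop) :
  (forall C, K C -> finitely_complete C) -> K VM0 ->
  implies_in (cls_pt K) M (Cube n') <-> has_blocking_rows M n'.
Proof.
move=> K_fc K_VM0; apply: implies_Cube_iff => [C [/K_fc //]|].
by split; last exact: VM0_pointed.
Qed.

End Classes.

Lemma algebraic_finitely_complete (C : Category) : cls_alg C -> finitely_complete C.
Proof.
by move=> [T /equivalent_finitely_complete]; apply; exact: variety_finitely_complete.
Qed.

Lemma essentially_algebraic_finitely_complete (C : Category) :
  cls_essalg C -> finitely_complete C.
Proof.
by move=> [T /equivalent_finitely_complete]; apply; exact: model_finitely_complete.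
Qed.

Theorem theorem2p3 (M : SEMatrix) (n' : nat) :
  1 <= rows M -> 1 <= nvars M -> 2 <= n' ->
  [<-> implies_in cls_lex M (Cube n');
       implies_in (cls_pt cls_lex) M (Cube n');
       implies_in cls_reg M (Cube n');
       implies_in (cls_pt cls_reg) M (Cube n');
       implies_in cls_alg M (Cube n');
       implies_in (cls_pt cls_alg) M (Cube n');
       implies_in cls_essalg M (Cube n');
       implies_in (cls_pt cls_essalg) M (Cube n');
       implies_in cls_regessalg M (Cube n');
       implies_in (cls_pt cls_regessalg) M (Cube n');
       exists idx : 'I_n' -> 'I_(rows M),
         ~ exists j : 'I_(lcols M), forall a : 'I_n', ent M (idx a) j = rcol M (idx a);
       ~ exists p : {ffun 'I_(lcols M) -> bool} -> bool,
           VM_algebra_bool M p /\ compatible_Rn M n' p].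
Proof.
move=> rows_gt0 _ n'_ge2.
have VM0_reg := variety_regular (VM0_theory M).
have VM0_ess := VM0_essentially_algebraic M.
have iff := implies_Cube_iff rows_gt0 n'_ge2.
have iff_pt := implies_Cube_iff_pt rows_gt0 n'_ge2.
have lex_fc : forall C, cls_lex C -> finitely_complete C by [].
have reg_fc : forall C, cls_reg C -> finitely_complete C by move=> C [].
have regess_fc : forall C, cls_regessalg C -> finitely_complete C by move=> C [_ []].
have alg_fc := algebraic_finitely_complete; have ess_fc := essentially_algebraic_finitely_complete.
have [lex lex_pt] := (iff _ lex_fc VM0_reg.1, iff_pt _ lex_fc VM0_reg.1).
have [reg reg_pt] := (iff _ reg_fc VM0_reg, iff_pt _ reg_fc VM0_reg).
have [alg alg_pt] := (iff _ alg_fc (variety_algebraic _), iff_pt _ alg_fc (variety_algebraic _)).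
have [ess ess_pt] := (iff _ ess_fc VM0_ess, iff_pt _ ess_fc VM0_ess).
have [regess regess_pt] :=
  (iff _ regess_fc (conj VM0_ess VM0_reg), iff_pt _ regess_fc (conj VM0_ess VM0_reg)).
have kE := has_blocking_rowsE M n'; have lE := blocking_rowsP M n'_ge2.
tfae.
- by move/lex/lex_pt.
- by move/lex_pt/reg.
- by move/reg/reg_pt.
- by move/reg_pt/alg.
- by move/alg/alg_pt.
- by move/alg_pt/ess.
- by move/ess/ess_pt.
- by move/ess_pt/regess.
- by move/regess/regess_pt.
- by move/regess_pt/kE.
- by move/kE/lE.
- by move/lE/lex.
Qed.
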